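(* Let $p>1$, let $T_p(\mathbf{x})=\sum_{i=1}^M P(\theta_i|\mathbf{x})^{\frac{p}{p-1}}$, and define $$B_p^{(2)}=1-{\rm E}\Big[\Big(\sum_{i=1}^M P(\theta_i|\mathbf{x})^{\frac{p}{p-1}}\Big)^{\frac{p-1}{p}}\Big].$$ Then for every measurable $\zeta_2:\mathcal{X}\to(0,\infty)$ with ${\rm E}[\zeta_2(\mathbf{x})]<\infty$ and ${\rm E}\big[\zeta_2(\mathbf{x})^{\frac{1}{1-p}}T_p(\mathbf{x})\big]<\infty$, $$1-{\rm E}^{\frac1p}[\zeta_2(\mathbf{x})]\,{\rm E}^{\frac{p-1}{p}}\big[\zeta_2(\mathbf{x})^{\frac{1}{1-p}}T_p(\mathbf{x})\big]\le B_p^{(2)},$$ with equality when $\zeta_2=T_p^{\frac{p-1}{p}}$. Consequently, every detector satisfies $P_e\ge B_p^{(2)}$ for all $p>1$.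
   Context: $M$-ary hypothesis testing: the true hypothesis $\theta$ is a random variable with values in $\{\theta_1,\ldots,\theta_M\}$, $\mathbf{x}$ is a random observation in a measurable space $\mathcal{X}$, and $P(\theta_i|\mathbf{x})$ is the posterior probability of $\theta_i$ given $\mathbf{x}$, assumed to satisfy $P(\theta_i|\mathbf{x})>0$ for all $\mathbf{x}$, $i$. A detector is a measurable map $\hat\theta:\mathcal{X}\to\{\theta_1,\ldots,\theta_M\}$, and its probability of error is $P_e=\Pr(\hat\theta(\mathbf{x})\neq\theta)$. ${\rm E}^a[Y]$ denotes $({\rm E}[Y])^a$. *)

From HB Require Import structures.
From mathcomp Require Import all_boot all_order all_algebra.
From mathcomp Require Import all_classical all_reals all_analysis.
Set Implicit Arguments. Unset Strict Implicit. Unset Printing Implicit Defensive.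
Import Order.TTheory GRing.Theory Num.Theory.
Local Open Scope classical_set_scope.
Local Open Scope ring_scope.

Section Defs.
Context {d dX : measure_display} {R : realType}
  {Omega : measurableType d} {X : measurableType dX} {M : nat}.

(* post is (a version of) the posterior P(theta_i | x): it is a measurable
   probability vector in x, and for every measurable A,
   Pr(theta = i, x \in A) = E[ 1_{x \in A} post (x) i ]. *)
Definition is_posterior (P : probability Omega R) (theta : Omega -> 'I_M)
  (x : Omega -> X) (post : X -> 'I_M -> R) : Prop :=
  (forall i, measurable_fun setT (fun y => post y i)) /\
  (forall y, \sum_(i < M) post y i = 1) /\
  (forall i (A : set X), measurable A ->
     P ([set w | theta w = i] `&` (x @^-1` A)) =
     (\int[P]_(w in x @^-1` A) (post (x w) i)%:E)%E).

Definition Tp (post : X -> 'I_M -> R) (p : R) (y : X) : R :=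
  \sum_(i < M) (post y i) `^ (p / (p - 1)).

Definition Bp2 (P : probability Omega R) (x : Omega -> X)
  (post : X -> 'I_M -> R) (p : R) : R :=
  1 - fine (\int[P]_w ((Tp post p (x w)) `^ ((p - 1) / p))%:E)%E.

Definition is_detector (dt : X -> 'I_M) : Prop :=
  forall i, measurable (dt @^-1` [set i]).

Definition Perr (P : probability Omega R) (theta : Omega -> 'I_M)
  (x : Omega -> X) (dt : X -> 'I_M) : R :=
  fine (P [set w | dt (x w) <> theta w]).

End Defs.

From HB Require Import structures.
From mathcomp Require Import all_boot all_order all_algebra.
From mathcomp Require Import all_classical all_reals all_analysis.
From mathcomp Require Import ring lra measurable_realfun.
Import Order.TTheory GRing.Theory Num.Theory.
Local Open Scope classical_set_scope.
Local Open Scope ring_scope.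

(* Writing zeta^(1/p) * (zeta^(1/(1-p)) T_p)^((p-1)/p) = T_p^((p-1)/p), Hölder's
   inequality with exponents p and p/(p-1) gives the bound, with equality for
   zeta = T_p^((p-1)/p).  For the error bound, a detector deciding theta_i on some
   region is correct there with conditional probability P(theta_i|x), and
   P(theta_i|x) <= T_p(x)^((p-1)/p) since the l^(p/(p-1)) norm of a probability
   vector dominates each of its entries; hence Pr(correct) <= E[T_p^((p-1)/p)]. *)

Section hoelder_bound.
Context {d} {T : measurableType d} {R : realType} (mu : {measure set T -> \bar R}).

Lemma hoelder_nonneg (f g : T -> R) (p q : R) :
  measurable_fun setT f -> measurable_fun setT g ->
  (forall t, 0 <= f t) -> (forall t, 0 <= g t) ->
  0 < p -> 0 < q -> p^-1 + q^-1 = 1 ->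
  (\int[mu]_t (f t `^ p)%:E < +oo)%E -> (\int[mu]_t (g t `^ q)%:E < +oo)%E ->
  (\int[mu]_t (f t * g t)%:E <=
    ((fine (\int[mu]_t (f t `^ p)%:E)) `^ p^-1 *
     (fine (\int[mu]_t (g t `^ q)%:E)) `^ q^-1)%:E)%E.
Proof.
move=> mf mg f0 g0 p0 q0 pq fi gi.
have := hoelder mu mf mg p0 q0 pq; rewrite Lnorm1 unlock /Lnorm.
have normE (h : T -> R) r : (forall t, 0 <= h t) ->
    (\int[mu]_t `|(EFin \o h) t| `^ r)%E = (\int[mu]_t (h t `^ r)%:E)%E.
  by move=> h0; apply: eq_integral => t _ /=; rewrite ger0_norm.
rewrite !normE // (eq_integral (fun t => (f t * g t)%:E)); last first.
  by move=> t _ /=; rewrite ger0_norm // mulr_ge0.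
move/le_trans; apply.
have ge0 (h : T -> R) r : (0 <= \int[mu]_t (h t `^ r)%:E)%E.
  by apply: integral_ge0 => t _; rewrite lee_fin powR_ge0.
rewrite -[X in (X `^ _ * _)%E]fineK ?ge0_fin_numE ?ge0 //.
by rewrite -[X in (_ * X `^ _)%E]fineK ?ge0_fin_numE ?ge0.
Qed.

Context {p : R} {g : T -> R}.
Hypotheses (p_gt1 : 1 < p) (mg : measurable_fun setT g) (g_gt0 : forall t, 0 < g t).

Let p_neq0 : p != 0. Proof. by rewrite gt_eqF // (lt_trans ltr01). Qed.
Let p1_neq0 : p - 1 != 0. Proof. by rewrite subr_eq0 gt_eqF. Qed.
Let p1'_neq0 : 1 - p != 0. Proof. by rewrite subr_eq0 eq_sym gt_eqF. Qed.

Lemma integral_powR_le_hoelder (zeta : T -> R) :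
  measurable_fun setT zeta -> (forall t, 0 < zeta t) ->
  (\int[mu]_t (zeta t)%:E < +oo)%E ->
  (\int[mu]_t ((zeta t) `^ (1 / (1 - p)) * g t)%:E < +oo)%E ->
  (\int[mu]_t ((g t) `^ ((p - 1) / p))%:E <=
    ((fine (\int[mu]_t (zeta t)%:E)) `^ (1 / p) *
     (fine (\int[mu]_t ((zeta t) `^ (1 / (1 - p)) * g t)%:E)) `^ ((p - 1) / p))%:E)%E.
Proof.
move=> mz z_gt0 zfin zgfin.
have p_gt0 : 0 < p by rewrite (lt_trans ltr01).
pose f t := (zeta t) `^ (1 / p).
pose h t := ((zeta t) `^ (1 / (1 - p)) * g t) `^ ((p - 1) / p).
have fpE t : f t `^ p = zeta t.
  by rewrite -powRrM div1r mulVf // powRr1 // ltW.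
have hpE t : h t `^ (p / (p - 1)) = (zeta t) `^ (1 / (1 - p)) * g t.
  rewrite -powRrM (_ : (p - 1) / p * (p / (p - 1)) = 1); last first.
    by field; rewrite p1_neq0 p_neq0.
  by rewrite powRr1 // mulr_ge0 ?powR_ge0 // ltW.
have fhE t : f t * h t = (g t) `^ ((p - 1) / p).
  rewrite /f /h powRM ?powR_ge0 ?ltW // -powRrM mulrA -powRD; last first.
    by rewrite (gt_eqF (z_gt0 _)) implybT.
  rewrite (_ : 1 / p + 1 / (1 - p) * ((p - 1) / p) = 0) ?powRr0 ?mul1r //.
  by field; rewrite p1'_neq0 p_neq0.
rewrite -(eq_integral _ _ (fun t _ => congr1 EFin (fhE t))).
rewrite -(eq_integral _ _ (fun t _ => congr1 EFin (fpE t))).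
rewrite -(eq_integral _ _ (fun t _ => congr1 EFin (hpE t))).
rewrite div1r -[(p - 1) / p]invf_div.
apply: hoelder_nonneg.
- exact: measurableT_comp (measurable_powR _) mz.
- apply: measurableT_comp (measurable_powR _) _.
  exact: measurable_funM (measurableT_comp (measurable_powR _) mz) mg.
- by move=> t; apply: powR_ge0.
- by move=> t; apply: powR_ge0.
- exact: p_gt0.
- by rewrite divr_gt0 // subr_gt0.
- by rewrite invf_div; field.
- by rewrite (eq_integral _ _ (fun t _ => congr1 EFin (fpE t))).
- by rewrite (eq_integral _ _ (fun t _ => congr1 EFin (hpE t))).
Qed.

Lemma hoelder_bound_at_powR :
  (fine (\int[mu]_t ((g t) `^ ((p - 1) / p))%:E)) `^ (1 / p) *
  (fine (\int[mu]_t (((g t) `^ ((p - 1) / p)) `^ (1 / (1 - p)) * g t)%:E))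
    `^ ((p - 1) / p)
  = fine (\int[mu]_t ((g t) `^ ((p - 1) / p))%:E).
Proof.
pose zeta t := (g t) `^ ((p - 1) / p).
have zgE t : (zeta t) `^ (1 / (1 - p)) * g t = zeta t.
  rewrite /zeta -powRrM -[X in _ * X](powRr1 (ltW (g_gt0 t))) -powRD; last first.
    by rewrite (gt_eqF (g_gt0 t)) implybT.
  by congr (_ `^ _); field; rewrite p1'_neq0 p_neq0.
rewrite (eq_integral _ _ (fun t _ => congr1 EFin (zgE t))) -powRD; last first.
  by rewrite (_ : 1 / p + (p - 1) / p = 1) ?oner_eq0 //; field.
rewrite (_ : 1 / p + (p - 1) / p = 1); last by field.
by rewrite powRr1 // fine_ge0 // integral_ge0 // => t _; rewrite lee_fin powR_ge0.
Qed.

End hoelder_bound.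

Lemma probability_integral_fin_num d (T : measurableType d) (R : realType)
  (P : probability T R) (f : T -> R) :
  measurable_fun setT f -> (forall t, 0 <= f t <= 1) ->
  (\int[P]_t (f t)%:E)%E \is a fin_num.
Proof.
move=> mf f01; have f0 t : (0 <= (f t)%:E)%E by rewrite lee_fin; case/andP: (f01 t).
rewrite ge0_fin_numE ?integral_ge0 //; apply: (@le_lt_trans _ _ 1%E); last exact: ltey.
rewrite -(probability_setT P) -[X in (_ <= X)%E]mul1e -integral_cst //.
apply: ge0_le_integral => //; first exact/measurable_EFinP.
by move=> t _; rewrite lee_fin; case/andP: (f01 t).
Qed.

Lemma measurable_Tp {dX} {X : measurableType dX} {R : realType} {M : nat}
  {post : X -> 'I_M -> R} (p : R) :
  (forall i, measurable_fun setT (post^~ i)) -> measurable_fun setT (Tp post p).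
Proof.
move=> mpost; apply: measurable_sum => i.
exact: measurableT_comp (measurable_powR _) (mpost i).
Qed.

Section posterior_lq_norm.
Context (R : realType) dX (X : measurableType dX) (M : nat)
  (post : X -> 'I_M -> R) (p : R).
Hypotheses (p_gt1 : 1 < p) (post_gt0 : forall y i, 0 < post y i)
  (post_sum1 : forall y, \sum_(i < M) post y i = 1).

Let q_ge1 : 1 <= p / (p - 1).
Proof. by rewrite ler_pdivlMr ?subr_gt0 // mul1r gerBl. Qed.

Let r_ge0 : 0 <= (p - 1) / p.
Proof. by rewrite divr_ge0 ?subr_ge0 ?ltW // (lt_trans ltr01). Qed.

Lemma post_le1 y i : post y i <= 1.
Proof.
by rewrite -(post_sum1 y) (bigD1 i) //= lerDl sumr_ge0 // => j _; exact: ltW.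
Qed.

Lemma powR_post_le_Tp y i : post y i `^ (p / (p - 1)) <= Tp post p y.
Proof.
by rewrite /Tp (bigD1 i) //= lerDl sumr_ge0 // => j _; exact: powR_ge0.
Qed.

Lemma Tp_ge0 y : 0 <= Tp post p y.
Proof. by rewrite /Tp sumr_ge0 // => j _; exact: powR_ge0. Qed.

Lemma Tp_gt0 y : 0 < Tp post p y.
Proof.
have M_gt0 : (0 < M)%N.
  case: M post post_sum1 => // post' /(_ y).
  by rewrite big_ord0 => /eqP; rewrite eq_sym oner_eq0.
exact: lt_le_trans (powR_gt0 _ (post_gt0 y (Ordinal M_gt0))) (powR_post_le_Tp _ _).
Qed.

Lemma Tp_le1 y : Tp post p y <= 1.
Proof.
by rewrite -(post_sum1 y) /Tp; apply: ler_sum => j _; rewrite ge1r_powR ?post_le1 ?post_gt0.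
Qed.

Lemma Tp_powR_le1 y : (Tp post p y) `^ ((p - 1) / p) <= 1.
Proof.
apply: (@le_trans _ _ (1 `^ ((p - 1) / p))); last by rewrite powR1.
by rewrite ge0_ler_powR ?nnegrE ?Tp_ge0 ?Tp_le1.
Qed.

Lemma post_le_Tp_powR y i : post y i <= (Tp post p y) `^ ((p - 1) / p).
Proof.
have -> : post y i = (post y i `^ (p / (p - 1))) `^ ((p - 1) / p).
  rewrite -powRrM mulrA divfK ?subr_eq0 ?gt_eqF // mulfV ?gt_eqF ?(lt_trans ltr01) //.
  by rewrite powRr1 // ltW.
by rewrite ge0_ler_powR ?nnegrE ?powR_ge0 ?Tp_ge0 ?powR_post_le_Tp.
Qed.

End posterior_lq_norm.

Section detection_error.
Context {d dX : measure_display} {R : realType} {Omega : measurableType d}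
  {X : measurableType dX} {M : nat} {P : probability Omega R}
  {theta : Omega -> 'I_M} {x : Omega -> X} {post : X -> 'I_M -> R}.
Hypotheses (mx : measurable_fun setT x)
  (mtheta : forall i, measurable [set w | theta w = i])
  (postP : is_posterior P theta x post) (post_ge0 : forall y i, 0 <= post y i).
Context {g : X -> R}.
Hypotheses (mg : measurable_fun setT g) (g_ge0 : forall y, 0 <= g y)
  (post_le_g : forall y i, post y i <= g y).

Lemma detector_correctE (dt : X -> 'I_M) :
  [set w | dt (x w) = theta w] =
  \big[setU/set0]_(i < M) ([set w | theta w = i] `&` x @^-1` (dt @^-1` [set i])).
Proof.
rewrite -bigcup_seq; apply/seteqP; split=> w.
- by move=> dtw; exists (theta w) => //; exact: mem_index_enum.
- by move=> [i _ [thw dtw]]; rewrite /= thw.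
Qed.

Lemma measurable_preimage_detector (dt : X -> 'I_M) i : is_detector dt ->
  measurable (x @^-1` (dt @^-1` [set i])).
Proof. by move=> dtP; rewrite -[_ @^-1` _]setTI; exact: mx measurableT _ (dtP i). Qed.

Lemma measurable_detector_correct (dt : X -> 'I_M) : is_detector dt ->
  measurable [set w | dt (x w) = theta w].
Proof.
move=> dtP; rewrite detector_correctE; apply: bigsetU_measurable => i _.
exact: measurableI (mtheta i) (measurable_preimage_detector _ i dtP).
Qed.

Lemma prob_detector_correct_le (dt : X -> 'I_M) : is_detector dt ->
  (P [set w | dt (x w) = theta w] <= \int[P]_w (g (x w))%:E)%E.
Proof.
move=> dtP; have [mpost [_ jointE]] := postP.
pose B i := x @^-1` (dt @^-1` [set i]).
have mB i : measurable (B i) by exact: measurable_preimage_detector.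
have coverB : \big[setU/set0]_(i <- index_enum 'I_M) B i = setT.
  rewrite -bigcup_seq; apply/seteqP; split=> // w _.
  by exists (dt (x w)) => //; exact: mem_index_enum.
have trivB : trivIset [set` index_enum 'I_M] B.
  by move=> i j _ _ [w [Bi Bj]]; rewrite -Bi -Bj.
rewrite detector_correctE measure_bigsetU_ord; last 2 first.
- by move=> i; exact: measurableI (mtheta i) (mB i).
- by move=> i j _ _ [w [[_ thi] [_ thj]]]; rewrite -thi -thj.
rewrite -coverB ge0_integral_bigsetU ?index_enum_uniq //; last 2 first.
- by rewrite coverB; apply/measurable_EFinP; exact: measurableT_comp mg mx.
- by move=> w _; rewrite lee_fin.
apply: lee_sum => i _.
apply: (@le_trans _ _ (\int[P]_(w in B i) (post (x w) i)%:E)%E).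
  by rewrite le_eqVlt; apply/orP; left; apply/eqP; exact: jointE i _ (dtP i).
apply: ge0_le_integral => //.
- by move=> w _; rewrite lee_fin.
- by apply/measurable_EFinP/measurable_funTS; exact: measurableT_comp (mpost i) mx.
- by apply/measurable_EFinP/measurable_funTS; exact: measurableT_comp mg mx.
- by move=> w _; rewrite lee_fin.
Qed.

Lemma Perr_ge_integral (dt : X -> 'I_M) : is_detector dt ->
  (\int[P]_w (g (x w))%:E)%E \is a fin_num ->
  1 - fine (\int[P]_w (g (x w))%:E)%E <= Perr P theta x dt.
Proof.
move=> dtP gfin; have mC := measurable_detector_correct _ dtP.
have PCfin : P [set w | dt (x w) = theta w] \is a fin_num.
  by rewrite ge0_fin_numE ?measure_ge0 // (le_lt_trans (probability_le1 P mC)) ?ltey.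
rewrite /Perr; have -> : [set w | dt (x w) <> theta w] = ~` [set w | dt (x w) = theta w] by [].
rewrite probability_setC // (@fineB _ 1%E) // lerB //.
exact: fine_le PCfin gfin (prob_detector_correct_le _ dtP).
Qed.

End detection_error.

Theorem mainTheorem6 (d dX : measure_display) (R : realType)
  (Omega : measurableType d) (X : measurableType dX) (M : nat)
  (P : probability Omega R) (theta : Omega -> 'I_M) (x : Omega -> X)
  (post : X -> 'I_M -> R) (p : R) :
  measurable_fun setT x ->
  (forall i, measurable [set w | theta w = i]) ->
  is_posterior P theta x post ->
  (forall y i, 0 < post y i) ->
  1 < p ->
  (forall zeta : X -> R,
     measurable_fun setT zeta ->
     (forall y, 0 < zeta y) ->
     (\int[P]_w (zeta (x w))%:E < +oo)%E ->
     (\int[P]_w ((zeta (x w)) `^ (1 / (1 - p)) * Tp post p (x w))%:E < +oo)%E ->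
     1 - (fine (\int[P]_w (zeta (x w))%:E)%E) `^ (1 / p) *
         (fine (\int[P]_w ((zeta (x w)) `^ (1 / (1 - p)) * Tp post p (x w))%:E)%E)
           `^ ((p - 1) / p)
     <= Bp2 P x post p) /\
  (let zeta := fun y => (Tp post p y) `^ ((p - 1) / p) in
     1 - (fine (\int[P]_w (zeta (x w))%:E)%E) `^ (1 / p) *
         (fine (\int[P]_w ((zeta (x w)) `^ (1 / (1 - p)) * Tp post p (x w))%:E)%E)
           `^ ((p - 1) / p)
     = Bp2 P x post p) /\
  (forall dt : X -> 'I_M, is_detector dt -> Bp2 P x post p <= Perr P theta x dt).
Proof.
move=> mx mtheta postP post_gt0 p_gt1; have [mpost [post_sum1 _]] := postP.
have mT : measurable_fun setT (fun w => Tp post p (x w)).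
  exact: measurableT_comp (measurable_Tp p mpost) mx.
have T_gt0 w : 0 < Tp post p (x w) by exact: Tp_gt0.
pose h y := (Tp post p y) `^ ((p - 1) / p).
have mh : measurable_fun setT h.
  exact: measurableT_comp (measurable_powR _) (measurable_Tp p mpost).
have hfin : (\int[P]_w (h (x w))%:E)%E \is a fin_num.
  apply: probability_integral_fin_num; first exact: measurableT_comp mh mx.
  by move=> w; rewrite powR_ge0 Tp_powR_le1.
split; [|split].
- move=> zeta mz z_gt0 zfin zTfin.
  have := integral_powR_le_hoelder P p_gt1 mT T_gt0 _ (measurableT_comp mz mx)
    (fun w => z_gt0 (x w)) zfin zTfin.
  move/(fine_le hfin) => /(_ isT) /=; rewrite /Bp2; lra.
- by rewrite /Bp2 (hoelder_bound_at_powR P p_gt1 T_gt0).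
- move=> dt dtP; apply: (Perr_ge_integral mx mtheta postP _ (g := h)) => //.
  + by move=> y i; exact: ltW.
  + by move=> y; exact: powR_ge0.
  + by move=> y i; exact: post_le_Tp_powR.
Qed.
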